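(* Let $L > 0$ and let $\alpha, \beta : \mathbb{R} \to \mathbb{R}^2$ be smooth $L$-periodic maps such that $\alpha'(s) \neq 0$ for all $s$, and \[ \langle \beta, \alpha' \rangle = 0, \qquad |\alpha'|^2 + |\beta|^2 = 1 \quad \text{on } \mathbb{R}. \] Set $a = \alpha' + \beta$ and $b = \alpha' - \beta$. Then there exist $s, r \in \mathbb{R}$ such that $a(s) + b(r) = 0$.
   Context: $\langle\cdot,\cdot\rangle$ and $|\cdot|$ are the Euclidean inner product and norm on $\mathbb{R}^2$. Note that $|a| = |b| = 1$. *)

From Stdlib Require Import Reals.
From Coquelicot Require Import Coquelicot.
Open Scope R_scope.

Definition vec := (R * R)%type.

Definition vadd (u v : vec) : vec := (fst u + fst v, snd u + snd v).
Definition vsub (u v : vec) : vec := (fst u - fst v, snd u - snd v).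
Definition inner (u v : vec) : R := fst u * fst v + snd u * snd v.
Definition vnorm (u : vec) : R := sqrt (inner u u).

Definition smooth (f : R -> R) : Prop := forall (n : nat) (x : R), ex_derive_n f n x.

Definition smooth2 (f : R -> vec) : Prop :=
  smooth (fun t => fst (f t)) /\ smooth (fun t => snd (f t)).

Definition periodic2 (L : R) (f : R -> vec) : Prop := forall x, f (x + L) = f x.

Definition deriv2 (f : R -> vec) (s : R) : vec :=
  (Derive (fun t => fst (f t)) s, Derive (fun t => snd (f t)) s).

(* If a(s) + b(r) never vanished, the unit curves a and c := -b would have disjoint images
   on the unit circle, hence could be separated by a line: inner (a s) u <= K < inner (c r) u.
   Since a - c = 2 alpha', the periodic function <alpha, u> would then be strictly decreasing
   on a period, which Rolle's theorem forbids. The separating line is found through the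
   stereographic projection from a point p of the image of c: on a period, a projects onto a
   compact interval [n1, n2], which by injectivity of the projection avoids the projection of c. *)

From Stdlib Require Import Reals Lra Psatz Classical.
From Coquelicot Require Import Coquelicot.
Open Scope R_scope.

Definition vperp (p : vec) : vec := (- snd p, fst p).

(* Junk value 0 at the pole x = p. *)
Definition stereo (p x : vec) : R := inner x (vperp p) / (1 - inner x p).

(* The line [inner x (arc_normal p n1 n2) = arc_level n1 n2] cuts the unit circle at the
   two points of stereographic coordinates n1 and n2 (see [arc_normal_stereo]). *)
Definition arc_normal (p : vec) (n1 n2 : R) : vec :=
  ((1 - n1 * n2) / 2 * fst p + (n1 + n2) / 2 * snd p,
   (1 - n1 * n2) / 2 * snd p - (n1 + n2) / 2 * fst p).

Definition arc_level (n1 n2 : R) : R := - (1 + n1 * n2) / 2.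

Lemma vnorm_sq (u : vec) : vnorm u ^ 2 = inner u u.
Proof.
  unfold vnorm, inner; rewrite pow2_sqrt; nra.
Qed.

Lemma inner_unit_lt_1 (x p : vec) :
  inner x x = 1 -> inner p p = 1 -> x <> p -> inner x p < 1.
Proof.
  destruct x as [x1 x2], p as [p1 p2]; unfold inner; simpl; intros hx hp hxp.
  assert (hne : x1 <> p1 \/ x2 <> p2).
  { apply NNPP; intro h; apply hxp; f_equal; apply NNPP; tauto. }
  destruct hne as [h | h];
    [assert (0 < (x1 - p1) ^ 2) | assert (0 < (x2 - p2) ^ 2)]; try (apply pow2_gt_0; lra); nra.
Qed.

Lemma unit_decomp (x p : vec) :
  inner p p = 1 ->
  x = (inner x p * fst p - inner x (vperp p) * snd p,
       inner x p * snd p + inner x (vperp p) * fst p).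
Proof.
  destruct x as [x1 x2], p as [p1 p2]; unfold inner, vperp; simpl; intro hp.
  f_equal; [transitivity (x1 * (p1 * p1 + p2 * p2)) | transitivity (x2 * (p1 * p1 + p2 * p2))];
    try (rewrite hp; ring); ring.
Qed.

(* Lagrange's identity [cross^2 + inner^2 = |x|^2 |p|^2], solved for the stereographic coordinate. *)
Lemma stereo_sq (x p : vec) :
  inner x x = 1 -> inner p p = 1 -> inner x p < 1 ->
  (1 - inner x p) * (stereo p x ^ 2 + 1) = 2.
Proof.
  intros hx hp hlt; unfold stereo.
  assert (hlag : inner x (vperp p) ^ 2 = (1 - inner x p) * (1 + inner x p)).
  { revert hx hp; destruct x as [x1 x2], p as [p1 p2]; unfold inner, vperp; simpl; nra. }
  field_simplify; [rewrite hlag; field |]; lra.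
Qed.

Lemma stereo_inj (x y p : vec) :
  inner x x = 1 -> inner y y = 1 -> inner p p = 1 ->
  inner x p < 1 -> inner y p < 1 -> stereo p x = stereo p y -> x = y.
Proof.
  intros hx hy hp hxp hyp ht.
  assert (hin : inner x p = inner y p).
  { pose proof (stereo_sq x p hx hp hxp); pose proof (stereo_sq y p hy hp hyp).
    rewrite ht in *; assert (0 <= stereo p y ^ 2) by nra; nra. }
  assert (hperp : inner x (vperp p) = inner y (vperp p)).
  { unfold stereo in ht; rewrite hin in ht.
    apply (Rmult_eq_reg_r (/ (1 - inner y p))); [exact ht |].
    apply Rinv_neq_0_compat; lra. }
  rewrite (unit_decomp x p hp), (unit_decomp y p hp), hin, hperp; reflexivity.
Qed.

Lemma arc_normal_stereo (x p : vec) (n1 n2 : R) :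
  inner x x = 1 -> inner p p = 1 -> inner x p < 1 ->
  inner x (arc_normal p n1 n2) - arc_level n1 n2
  = (1 - inner x p) / 2 * ((stereo p x - n1) * (stereo p x - n2)).
Proof.
  intros hx hp hlt.
  pose proof (stereo_sq x p hx hp hlt) as hsq.
  assert (hlin : (1 - inner x p) * stereo p x = inner x (vperp p)).
  { unfold stereo; field; lra. }
  replace ((1 - inner x p) / 2 * ((stereo p x - n1) * (stereo p x - n2)))
    with (((1 - inner x p) * (stereo p x ^ 2 + 1)
           - (n1 + n2) * ((1 - inner x p) * stereo p x)
           + (n1 * n2 - 1) * (1 - inner x p)) / 2) by field.
  rewrite hsq, hlin.
  destruct x as [x1 x2], p as [p1 p2]; unfold inner, arc_normal, arc_level, vperp; simpl.
  field.
Qed.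

Lemma arc_normal_pole (p : vec) (n1 n2 : R) :
  inner p p = 1 -> inner p (arc_normal p n1 n2) - arc_level n1 n2 = 1.
Proof.
  destruct p as [p1 p2]; unfold inner, arc_normal, arc_level; simpl; intro hp.
  replace (p1 * ((1 - n1 * n2) / 2 * p1 + (n1 + n2) / 2 * p2)
           + p2 * ((1 - n1 * n2) / 2 * p2 - (n1 + n2) / 2 * p1) - - (1 + n1 * n2) / 2)
    with ((1 - n1 * n2) / 2 * (p1 * p1 + p2 * p2) + (1 + n1 * n2) / 2) by field.
  rewrite hp; field.
Qed.

Section SeparatedUnitCurves.

Variables (a c : R -> vec).
Hypothesis a1_cont : forall s, continuity_pt (fun t => fst (a t)) s.
Hypothesis a2_cont : forall s, continuity_pt (fun t => snd (a t)) s.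
Hypothesis a_unit : forall s, inner (a s) (a s) = 1.
Hypothesis c_unit : forall r, inner (c r) (c r) = 1.
Hypothesis a_c_disjoint : forall s r, a s <> c r.

Lemma continuity_pt_inner_curve (u : vec) (s : R) :
  continuity_pt (fun t => inner (a t) u) s.
Proof.
  unfold inner; apply continuity_pt_plus; apply continuity_pt_mult; auto;
    apply continuity_pt_const; intros ? ?; reflexivity.
Qed.

Lemma continuity_pt_stereo_curve (p : vec) (s : R) :
  inner p p = 1 -> (forall t, a t <> p) -> continuity_pt (fun t => stereo p (a t)) s.
Proof.
  intros hp hap; unfold stereo; apply continuity_pt_div.
  - apply continuity_pt_inner_curve.
  - apply continuity_pt_minus;
      [apply continuity_pt_const; intros ? ?; reflexivity | apply continuity_pt_inner_curve].
  - pose proof (inner_unit_lt_1 (a s) p (a_unit s) hp (hap s)); lra.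
Qed.

Lemma stereo_not_between (p y : vec) (s1 s2 : R) :
  inner p p = 1 -> (forall t, a t <> p) -> y <> p -> (forall t, a t <> y) ->
  inner y y = 1 ->
  stereo p (a s1) <= stereo p y <= stereo p (a s2) -> False.
Proof.
  intros hp hap hyp hay hy hbetween.
  assert (hcont : continuity (fun t => stereo p (a t))).
  { intro t; apply continuity_pt_stereo_curve; assumption. }
  destruct (IVT_gen _ s1 s2 (stereo p y) hcont) as [x [_ hx]].
  { rewrite Rmin_left, Rmax_right; lra. }
  apply (hay x), (stereo_inj _ _ p (a_unit x) hy hp); try assumption;
    apply inner_unit_lt_1; auto.
Qed.

Lemma unit_curves_separated (l h : R) :
  l <= h ->
  exists u K, (forall s, l <= s <= h -> inner (a s) u <= K) /\ (forall r, K < inner (c r) u).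
Proof.
  intros hlh.
  set (p := c l); assert (hp : inner p p = 1) by apply c_unit.
  assert (hap : forall t, a t <> p) by (intro t; apply a_c_disjoint).
  assert (hlt : forall t, inner (a t) p < 1) by (intro t; apply inner_unit_lt_1; auto).
  set (T := fun t => stereo p (a t)).
  assert (hT : forall t, l <= t <= h -> continuity_pt T t)
    by (intros t _; apply continuity_pt_stereo_curve; assumption).
  destruct (continuity_ab_min T l h hlh hT) as [s1 [hmin hs1]].
  destruct (continuity_ab_maj T l h hlh hT) as [s2 [hmax _]].
  exists (arc_normal p (T s1) (T s2)), (arc_level (T s1) (T s2)); split.
  - intros s hs.
    pose proof (arc_normal_stereo (a s) p (T s1) (T s2) (a_unit s) hp (hlt s)) as e.
    specialize (hmin s hs); specialize (hmax s hs); specialize (hlt s); fold (T s) in e.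
    assert ((T s - T s1) * (T s - T s2) <= 0) by nra; nra.
  - intro r.
    destruct (classic (c r = p)) as [hrp | hrp].
    + rewrite hrp; pose proof (arc_normal_pole p (T s1) (T s2) hp); lra.
    + assert (hcr : forall t, a t <> c r) by (intro t; apply a_c_disjoint).
      pose proof (inner_unit_lt_1 (c r) p (c_unit r) hp hrp) as hcp.
      pose proof (arc_normal_stereo (c r) p (T s1) (T s2) (c_unit r) hp hcp) as e.
      assert (hout : stereo p (c r) < T s1 \/ T s2 < stereo p (c r)).
      { destruct (Rlt_or_le (stereo p (c r)) (T s1)) as [h1 | h1]; [now left |].
        destruct (Rlt_or_le (T s2) (stereo p (c r))) as [h2 | h2]; [now right |].
        exfalso; apply (stereo_not_between p (c r) s1 s2); auto. }
      assert (T s1 <= T s2) by (apply hmax; lra).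
      assert (0 < (stereo p (c r) - T s1) * (stereo p (c r) - T s2)) by nra.
      assert (0 < (1 - inner (c r) p) / 2 * ((stereo p (c r) - T s1) * (stereo p (c r) - T s2)))
        by (apply Rmult_lt_0_compat; lra).
      lra.
Qed.

End SeparatedUnitCurves.

Lemma is_derive_Rolle (g dg : R -> R) (l h : R) :
  l < h -> (forall x, is_derive g x (dg x)) -> g l = g h ->
  exists x, l <= x <= h /\ dg x = 0.
Proof.
  intros hlh hg heq.
  destruct (MVT_gen g l h dg) as [x [hx e]].
  - intros x _; apply hg.
  - intros x _; apply continuity_pt_filterlim; exact (ex_derive_continuous g x (ex_intro _ _ (hg x))).
  - rewrite Rmin_left, Rmax_right in hx by lra.
    exists x; split; [exact hx |].
    apply (Rmult_eq_reg_r (h - l)); lra.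
Qed.

Lemma smooth_continuous (f : R -> R) (s : R) : smooth f -> continuity_pt f s.
Proof.
  intro hf; apply continuity_pt_filterlim; exact (ex_derive_continuous f s (hf 1%nat s)).
Qed.

Lemma smooth_Derive_continuous (f : R -> R) (s : R) : smooth f -> continuity_pt (Derive f) s.
Proof.
  intro hf; apply continuity_pt_filterlim; exact (ex_derive_continuous (Derive f) s (hf 2%nat s)).
Qed.

Lemma is_derive_inner (f : R -> vec) (u : vec) (x : R) :
  smooth2 f -> is_derive (fun t => inner (f t) u) x (inner (deriv2 f x) u).
Proof.
  intros [hf1 hf2]; unfold inner, deriv2; simpl.
  apply (is_derive_plus (fun t => fst (f t) * fst u) (fun t => snd (f t) * snd u));
    [apply (is_derive_scal_l (fun t => fst (f t)) x _ (fst u)), Derive_correct; exact (hf1 1%nat x)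
    |apply (is_derive_scal_l (fun t => snd (f t)) x _ (snd u)), Derive_correct; exact (hf2 1%nat x)].
Qed.

Theorem lemma2p2 (L : R) (alpha beta : R -> vec) :
  0 < L ->
  smooth2 alpha -> smooth2 beta ->
  periodic2 L alpha -> periodic2 L beta ->
  (forall s, deriv2 alpha s <> (0, 0)) ->
  (forall s, inner (beta s) (deriv2 alpha s) = 0) ->
  (forall s, vnorm (deriv2 alpha s) ^ 2 + vnorm (beta s) ^ 2 = 1) ->
  let a := fun s => vadd (deriv2 alpha s) (beta s) in
  let b := fun s => vsub (deriv2 alpha s) (beta s) in
  exists s r : R, vadd (a s) (b r) = (0, 0).
Proof.
  intros hL halpha [hb1 hb2] halpha_per _ _ horth hnorm a b.
  apply NNPP; intro hnone.
  set (c := fun r => vsub (beta r) (deriv2 alpha r)).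
  assert (hunit : forall s, inner (a s) (a s) = 1 /\ inner (c s) (c s) = 1).
  { intro s; specialize (hnorm s); specialize (horth s); rewrite !vnorm_sq in hnorm.
    revert hnorm horth; unfold a, c, vadd, vsub, inner; simpl; split; nra. }
  assert (hdisj : forall s r, a s <> c r).
  { intros s r e; apply hnone; exists s, r.
    revert e; unfold a, b, c, vadd, vsub; simpl; intro e; injection e; intros; f_equal; lra. }
  destruct halpha as [ha1 ha2].
  assert (ha1_cont : forall s, continuity_pt (fun t => fst (a t)) s).
  { intro s; apply continuity_pt_plus;
      [apply smooth_Derive_continuous, ha1 | apply smooth_continuous, hb1]. }
  assert (ha2_cont : forall s, continuity_pt (fun t => snd (a t)) s).
  { intro s; apply continuity_pt_plus;
      [apply smooth_Derive_continuous, ha2 | apply smooth_continuous, hb2]. }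
  destruct (unit_curves_separated a c ha1_cont ha2_cont (fun s => proj1 (hunit s))
              (fun r => proj2 (hunit r)) hdisj 0 L) as [u [K [hau hcu]]]; [lra |].
  destruct (is_derive_Rolle (fun t => inner (alpha t) u) (fun t => inner (deriv2 alpha t) u) 0 L)
    as [x [hx hdx]]; try lra.
  - intro x; apply is_derive_inner; split; assumption.
  - rewrite <- (Rplus_0_l L), halpha_per; reflexivity.
  - assert (inner (a x) u - inner (c x) u = 2 * inner (deriv2 alpha x) u)
      by (unfold a, c, vadd, vsub, inner; simpl; ring).
    specialize (hau x hx); specialize (hcu x); lra.
Qed.
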